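(* Assume conditions A and D' hold for the family of stochastic matrices $(p_{ij}(\varepsilon))_{i,j\in\mathbb{X}}$, $\varepsilon\in(0,\varepsilon_0]$. Then for every $r\in\mathbb{X}$ the non-absorption probability $\bar p_{rr}(\varepsilon)=1-p_{rr}(\varepsilon)$ admits a pivotal expansion with explicit power-type remainder bound: there exist integers $0\le\bar l^-_{rr}\le\bar l^+_{rr}$, real coefficients $\bar a_{rr}[l]$, $\bar l^-_{rr}\le l\le\bar l^+_{rr}$, with $\bar a_{rr}[\bar l^-_{rr}]\ne0$, and constants $\bar\delta_{rr}\in(0,1]$, $\bar G_{rr}\in(0,\infty)$, $\bar\varepsilon_{rr}\in(0,\varepsilon_0]$, such that $\big|\bar p_{rr}(\varepsilon)-\sum_{l=\bar l^-_{rr}}^{\bar l^+_{rr}}\bar a_{rr}[l]\varepsilon^l\big|\le\bar G_{rr}\varepsilon^{\bar l^+_{rr}+\bar\delta_{rr}}$ for $0<\varepsilon\le\bar\varepsilon_{rr}$.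
   Context: Let $\mathbb{X}=\{1,\dots,N\}$, $0<\varepsilon_0\le1$, and for each $\varepsilon\in(0,\varepsilon_0]$ let $(p_{ij}(\varepsilon))_{i,j\in\mathbb{X}}$ be a stochastic matrix (transition probabilities of a Markov chain). Condition A: there are nonempty sets $\mathbb{Y}_i\subseteq\mathbb{X}$, $i\in\mathbb{X}$, such that (a) $p_{ij}(\varepsilon)>0$ for $j\in\mathbb{Y}_i$, $i\in\mathbb{X}$, $\varepsilon\in(0,\varepsilon_0]$; (b) $p_{ij}(\varepsilon)=0$ for $j\notin\mathbb{Y}_i$, $i\in\mathbb{X}$, $\varepsilon\in(0,\varepsilon_0]$; (c) for every $i,j\in\mathbb{X}$ there exist $n\ge1$ and states $i=l_0,l_1,\dots,l_n=j$ with $l_m\in\mathbb{Y}_{l_{m-1}}$ for $m=1,\dots,n$. Condition D': for all $i\in\mathbb{X}$, $j\in\mathbb{Y}_i$, $p_{ij}(\varepsilon)=\sum_{l=l^-_{ij}}^{l^+_{ij}}a_{ij}[l]\varepsilon^l+o_{ij}(\varepsilon)$ for $\varepsilon\in(0,\varepsilon_0]$, where $0\le l^-_{ij}\le l^+_{ij}<\infty$ are integers, $a_{ij}[l^-_{ij}]>0$, and $|o_{ij}(\varepsilon)|\le G_{ij}\varepsilon^{l^+_{ij}+\delta_{ij}}$ for $0<\varepsilon\le\varepsilon_{ij}$, with $\delta_{ij}\in(0,1]$, $G_{ij}\in(0,\infty)$, $\varepsilon_{ij}\in(0,\varepsilon_0]$. *)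

(* concrete reals R. States X = {1..N} are encoded as 0..N-1. *)
From Stdlib Require Import Reals Lra Lia List.
Open Scope R_scope.

Definition fsum (N : nat) (f : nat -> R) : R :=
  fold_right Rplus 0 (map f (seq 0 N)).

Definition psum (a : nat -> R) (lm lp : nat) (eps : R) : R :=
  fold_right Rplus 0 (map (fun l => a l * eps ^ l) (seq lm (S (lp - lm)))).

Definition stochastic_family (N : nat) (eps0 : R) (p : R -> nat -> nat -> R) : Prop :=
  forall eps, 0 < eps <= eps0 ->
    (forall i j, (i < N)%nat -> (j < N)%nat -> 0 <= p eps i j) /\
    (forall i, (i < N)%nat -> fsum N (fun j => p eps i j) = 1).

(* Condition A, with Y i j meaning j \in Y_i *)
Definition condition_A (N : nat) (eps0 : R) (p : R -> nat -> nat -> R)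
  (Y : nat -> nat -> Prop) : Prop :=
  (forall i j, (i < N)%nat -> Y i j -> (j < N)%nat) /\
  (forall i, (i < N)%nat -> exists j, Y i j) /\
  (forall eps i j, 0 < eps <= eps0 -> (i < N)%nat -> Y i j -> p eps i j > 0) /\
  (forall eps i j, 0 < eps <= eps0 -> (i < N)%nat -> (j < N)%nat -> ~ Y i j ->
     p eps i j = 0) /\
  (forall i j, (i < N)%nat -> (j < N)%nat ->
     exists (n : nat) (l : nat -> nat), (1 <= n)%nat /\ l 0%nat = i /\ l n = j /\
       forall m, (1 <= m <= n)%nat -> Y (l (m - 1)%nat) (l m)).

Definition condition_D' (N : nat) (eps0 : R) (p : R -> nat -> nat -> R)
  (Y : nat -> nat -> Prop) : Prop :=
  forall i j, (i < N)%nat -> Y i j ->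
    exists (lm lp : nat) (a : nat -> R) (delta G e : R),
      (lm <= lp)%nat /\ a lm > 0 /\
      0 < delta <= 1 /\ 0 < G /\ 0 < e <= eps0 /\
      forall eps, 0 < eps <= e ->
        Rabs (p eps i j - psum a lm lp eps) <= G * Rpower eps (INR lp + delta).

From Stdlib Require Import Reals Lra Lia List Wf_nat Classical ClassicalEpsilon.
Open Scope R_scope.

(* Since the rows are stochastic, [1 - p_rr] is the sum of the exit probabilities
   [p_rj], [j <> r].  By D' each of them is [c_j eps^L + O(eps^(L + delta))] at the
   minimal leading order [L = min_j l_rj], with [c_j = a_rj[L] > 0] when [l_rj = L]
   and [c_j = 0] otherwise.  Summing gives [1 - p_rr = c eps^L + O(eps^(L + delta))]
   with [c > 0]; condition A guarantees that some exit [j] exists. *)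

Lemma Rpower_pos (x a : R) : 0 < Rpower x a.
Proof. exact (exp_pos _). Qed.

Lemma Rpower_le_1 (x a : R) : 0 < x <= 1 -> 0 <= a -> Rpower x a <= 1.
Proof.
  intros Hx Ha.
  replace 1 with (Rpower 1 a) by (unfold Rpower; rewrite ln_1, Rmult_0_r; apply exp_0).
  now apply Rle_Rpower_l.
Qed.

Lemma Rpower_le_antimono (x a b : R) : 0 < x <= 1 -> a <= b -> Rpower x b <= Rpower x a.
Proof.
  intros Hx Hab.
  replace b with (a + (b - a)) by ring.
  rewrite Rpower_plus.
  pose proof (Rpower_pos x a). pose proof (Rpower_le_1 x (b - a) Hx ltac:(lra)).
  nra.
Qed.

Lemma pow_le_Rpower (x : R) (n : nat) (a : R) :
  0 < x <= 1 -> a <= INR n -> x ^ n <= Rpower x a.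
Proof.
  intros Hx Ha. rewrite <- Rpower_pow by lra. now apply Rpower_le_antimono.
Qed.

Definition has_leading_term (eps0 : R) (f : R -> R) (L : nat) (c : R) : Prop :=
  exists delta G e, 0 < delta <= 1 /\ 0 < G /\ 0 < e <= eps0 /\
    forall eps, 0 < eps <= e ->
      Rabs (f eps - c * eps ^ L) <= G * Rpower eps (INR L + delta).

Definition has_expansion (eps0 : R) (f : R -> R) (lm : nat) : Prop :=
  exists (lp : nat) (a : nat -> R) (delta G e : R),
    (lm <= lp)%nat /\ a lm > 0 /\ 0 < delta <= 1 /\ 0 < G /\ 0 < e <= eps0 /\
    forall eps, 0 < eps <= e ->
      Rabs (f eps - psum a lm lp eps) <= G * Rpower eps (INR lp + delta).

Lemma monomial_sum_bound (a : nat -> R) (m : nat) (s : list nat) :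
  Forall (fun l => (m <= l)%nat) s ->
  exists B, 0 <= B /\ forall eps, 0 < eps <= 1 ->
    Rabs (fold_right Rplus 0 (map (fun l => a l * eps ^ l) s)) <= B * eps ^ m.
Proof.
  induction 1 as [| l s Hl _ (B & HB & Hs)].
  - exists 0; split; [lra |]. intros eps _. simpl. rewrite Rabs_R0. lra.
  - exists (Rabs (a l) + B); split; [pose proof (Rabs_pos (a l)); lra |].
    intros eps Heps. simpl.
    specialize (Hs eps Heps).
    assert (eps ^ l <= eps ^ m)
      by (rewrite <- (Rpower_pow m) by lra; apply pow_le_Rpower; [lra | now apply le_INR]).
    pose proof (Rabs_triang (a l * eps ^ l)
                  (fold_right Rplus 0 (map (fun l => a l * eps ^ l) s))).
    rewrite Rabs_mult, (Rabs_pos_eq (eps ^ l)) in * by (apply pow_le; lra).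
    pose proof (Rabs_pos (a l)).
    nra.
Qed.

Section LeadingTerms.

Variable eps0 : R.
Hypothesis eps0_range : 0 < eps0 <= 1.

Lemma leading_term_ext (f g : R -> R) (L : nat) (c : R) :
  (forall eps, 0 < eps <= eps0 -> f eps = g eps) ->
  has_leading_term eps0 f L c -> has_leading_term eps0 g L c.
Proof.
  intros Hfg (delta & G & e & Hd & HG & He & Hf).
  exists delta, G, e; repeat split; try lra.
  intros eps Heps. rewrite <- Hfg by lra. now apply Hf.
Qed.

Lemma leading_term_0 (L : nat) : has_leading_term eps0 (fun _ => 0) L 0.
Proof.
  exists 1, 1, eps0; repeat split; try lra.
  intros eps _. rewrite Rmult_0_l, Rminus_0_r, Rabs_R0.
  pose proof (Rpower_pos eps (INR L + 1)); lra.
Qed.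

Lemma leading_term_add (f g : R -> R) (L : nat) (c d : R) :
  has_leading_term eps0 f L c -> has_leading_term eps0 g L d ->
  has_leading_term eps0 (fun eps => f eps + g eps) L (c + d).
Proof.
  intros (d1 & G1 & e1 & Hd1 & HG1 & He1 & Hf) (d2 & G2 & e2 & Hd2 & HG2 & He2 & Hg).
  pose proof (Rmin_l d1 d2). pose proof (Rmin_r d1 d2).
  pose proof (Rmin_l e1 e2). pose proof (Rmin_r e1 e2).
  assert (0 < Rmin d1 d2) by (apply Rmin_glb_lt; lra).
  assert (0 < Rmin e1 e2) by (apply Rmin_glb_lt; lra).
  exists (Rmin d1 d2), (G1 + G2), (Rmin e1 e2); repeat split; try lra.
  intros eps Heps.
  specialize (Hf eps ltac:(lra)). specialize (Hg eps ltac:(lra)).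
  assert (Rpower eps (INR L + d1) <= Rpower eps (INR L + Rmin d1 d2))
    by (apply Rpower_le_antimono; lra).
  assert (Rpower eps (INR L + d2) <= Rpower eps (INR L + Rmin d1 d2))
    by (apply Rpower_le_antimono; lra).
  replace (f eps + g eps - (c + d) * eps ^ L)
    with ((f eps - c * eps ^ L) + (g eps - d * eps ^ L)) by ring.
  pose proof (Rabs_triang (f eps - c * eps ^ L) (g eps - d * eps ^ L)).
  nra.
Qed.

(* A term of order [L'] is [O(eps^(L+1))], hence negligible at any lower order [L]. *)
Lemma leading_term_lower_order (f : R -> R) (L L' : nat) (c : R) :
  (L < L')%nat -> has_leading_term eps0 f L' c -> has_leading_term eps0 f L 0.
Proof.
  intros HLL' (delta & G & e & Hd & HG & He & Hf).
  assert (HLL'R : INR L + 1 <= INR L') by (rewrite <- S_INR; apply le_INR; lia).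
  exists delta, (G + Rabs c), e; repeat split; try lra.
  - pose proof (Rabs_pos c); lra.
  - intros eps Heps.
    specialize (Hf eps Heps).
    assert (Rpower eps (INR L' + delta) <= Rpower eps (INR L + delta))
      by (apply Rpower_le_antimono; lra).
    assert (eps ^ L' <= Rpower eps (INR L + delta)) by (apply pow_le_Rpower; lra).
    replace (f eps - 0 * eps ^ L) with ((f eps - c * eps ^ L') + c * eps ^ L') by ring.
    pose proof (Rabs_triang (f eps - c * eps ^ L') (c * eps ^ L')).
    rewrite Rabs_mult, (Rabs_pos_eq (eps ^ L')) in * by (apply pow_le; lra).
    pose proof (Rabs_pos c).
    nra.
Qed.

Lemma expansion_leading_term (f : R -> R) (lm : nat) :
  has_expansion eps0 f lm -> exists c, 0 < c /\ has_leading_term eps0 f lm c.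
Proof.
  intros (lp & a & delta & G & e & Hlp & Ha & Hd & HG & He & Hf).
  assert (Htail : Forall (fun l => (S lm <= l)%nat) (seq (S lm) (lp - lm)))
    by (apply Forall_forall; intros l Hl; apply in_seq in Hl; lia).
  destruct (monomial_sum_bound a (S lm) _ Htail) as (B & HB & Hs).
  exists (a lm); split; [lra |].
  exists delta, (G + B), e; repeat split; try lra.
  intros eps Heps.
  set (tail := fold_right Rplus 0 (map (fun l => a l * eps ^ l) (seq (S lm) (lp - lm)))).
  assert (Hpsum : psum a lm lp eps = a lm * eps ^ lm + tail) by reflexivity.
  specialize (Hf eps Heps). specialize (Hs eps ltac:(lra)). fold tail in Hs.
  rewrite Hpsum in Hf.
  apply le_INR in Hlp.
  assert (Rpower eps (INR lp + delta) <= Rpower eps (INR lm + delta))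
    by (apply Rpower_le_antimono; lra).
  assert (eps ^ S lm <= Rpower eps (INR lm + delta))
    by (apply pow_le_Rpower; [lra | rewrite S_INR; lra]).
  replace (f eps - a lm * eps ^ lm) with ((f eps - (a lm * eps ^ lm + tail)) + tail) by ring.
  pose proof (Rabs_triang (f eps - (a lm * eps ^ lm + tail)) tail).
  nra.
Qed.

End LeadingTerms.

Lemma fsum_S (N : nat) (f : nat -> R) : fsum (S N) f = fsum N f + f N.
Proof.
  unfold fsum. rewrite seq_S, map_app, fold_right_app. simpl.
  induction (map f (seq 0 N)) as [| x l IH]; simpl; [ring | rewrite IH; ring].
Qed.

Lemma fsum_remove (N r : nat) (f : nat -> R) :
  fsum N f = (if r <? N then f r else 0) + fsum N (fun j => if j =? r then 0 else f j).
Proof.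
  induction N as [| N IH]; [unfold fsum; simpl; ring |].
  rewrite !fsum_S, IH.
  destruct (Nat.eqb_spec N r), (Nat.ltb_spec r N), (Nat.ltb_spec r (S N));
    try lia; subst; ring.
Qed.

Lemma fsum_nonneg (N : nat) (f : nat -> R) :
  (forall j, (j < N)%nat -> 0 <= f j) -> 0 <= fsum N f.
Proof.
  induction N as [| N IH]; intros Hf; [unfold fsum; simpl; lra |].
  rewrite fsum_S.
  pose proof (Hf N ltac:(lia)).
  assert (0 <= fsum N f) by (apply IH; intros; apply Hf; lia).
  lra.
Qed.

Lemma fsum_le_term (N j0 : nat) (f : nat -> R) :
  (forall j, (j < N)%nat -> 0 <= f j) -> (j0 < N)%nat -> f j0 <= fsum N f.
Proof.
  induction N as [| N IH]; intros Hf Hj0; [lia |].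
  rewrite fsum_S.
  pose proof (Hf N ltac:(lia)).
  destruct (Nat.eq_dec j0 N) as [-> | Hne].
  - assert (0 <= fsum N f) by (apply fsum_nonneg; intros; apply Hf; lia). lra.
  - assert (f j0 <= fsum N f) by (apply IH; [intros; apply Hf |]; lia). lra.
Qed.

Lemma leading_term_fsum (eps0 : R) (N L : nat) (g : nat -> R -> R) (c : nat -> R) :
  0 < eps0 <= 1 ->
  (forall j, (j < N)%nat -> has_leading_term eps0 (g j) L (c j)) ->
  has_leading_term eps0 (fun eps => fsum N (fun j => g j eps)) L (fsum N c).
Proof.
  intros Heps0 Hg. induction N as [| N IH].
  - exact (leading_term_0 eps0 Heps0 L).
  - rewrite fsum_S.
    apply leading_term_ext with (fun eps => fsum N (fun j => g j eps) + g N eps).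
    + intros eps _. now rewrite fsum_S.
    + apply leading_term_add; [exact Heps0 | apply IH; intros; apply Hg | apply Hg]; lia.
Qed.

Lemma path_first_exit (l : nat -> nat) (r k : nat) :
  l 0%nat = r -> l k <> r ->
  exists m, (1 <= m <= k)%nat /\ l (m - 1)%nat = r /\ l m <> r.
Proof.
  intros H0. induction k as [| k IH]; intros Hk; [congruence |].
  destruct (Nat.eq_dec (l k) r) as [E | E].
  - exists (S k). replace (S k - 1)%nat with k by lia. repeat split; auto; lia.
  - destruct (IH E) as (m & Hm & Hm'). exists m. split; [lia | exact Hm'].
Qed.

Section NonAbsorption.

Variables (N : nat) (eps0 : R) (p : R -> nat -> nat -> R) (Y : nat -> nat -> Prop) (r : nat).
Hypothesis eps0_range : 0 < eps0 <= 1.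
Hypothesis HA : condition_A N eps0 p Y.
Hypothesis HD : condition_D' N eps0 p Y.
Hypothesis r_lt : (r < N)%nat.

Definition exit_order (L : nat) : Prop :=
  exists j, j <> r /\ Y r j /\ has_expansion eps0 (fun eps => p eps r j) L.

Definition exit_prob (j : nat) (eps : R) : R := if j =? r then 0 else p eps r j.

Lemma exit_order_exists : (2 <= N)%nat -> exists L, exit_order L.
Proof.
  intros HN. destruct HA as (_ & _ & _ & _ & Hpath).
  set (j := if r =? 0 then 1%nat else 0%nat).
  assert (Hj : (j < N)%nat /\ j <> r) by (unfold j; destruct (Nat.eqb_spec r 0); lia).
  destruct (Hpath r j r_lt (proj1 Hj)) as (n & l & _ & Hl0 & Hln & Hstep).
  destruct (path_first_exit l r n Hl0 ltac:(rewrite Hln; apply Hj)) as (m & Hm & Hm1 & Hm2).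
  specialize (Hstep m Hm). rewrite Hm1 in Hstep.
  destruct (HD r (l m) r_lt Hstep) as (lm & Hexp).
  now exists lm, (l m).
Qed.

Lemma exit_prob_leading_term (L : nat) :
  (forall L', exit_order L' -> (L <= L')%nat) ->
  forall j, exists c, (j < N)%nat -> 0 <= c /\
    (j <> r -> has_expansion eps0 (fun eps => p eps r j) L -> 0 < c) /\
    has_leading_term eps0 (exit_prob j) L c.
Proof.
  intros Hmin j.
  destruct HA as (_ & _ & _ & Hzero & _).
  destruct (Nat.eq_dec j r) as [-> | Hjr].
  { exists 0; intros _; repeat split; [lra | tauto |].
    apply leading_term_ext with (fun _ => 0); [| exact (leading_term_0 eps0 eps0_range L)].
    intros eps _. unfold exit_prob. now rewrite Nat.eqb_refl. }
  assert (Hexit : forall eps, 0 < eps <= eps0 -> p eps r j = exit_prob j eps)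
    by (intros; unfold exit_prob; now destruct (Nat.eqb_spec j r)).
  destruct (classic (has_expansion eps0 (fun eps => p eps r j) L)) as [HexpL | HexpL].
  { destruct (expansion_leading_term eps0 eps0_range _ _ HexpL) as (c & Hc & Hlead).
    exists c; intros _; repeat split; [lra | intros; lra |].
    exact (leading_term_ext eps0 _ _ L c Hexit Hlead). }
  exists 0; intros Hj; repeat split; [lra | intros _ H; contradiction |].
  destruct (classic (Y r j)) as [HYj | HYj].
  - destruct (HD r j r_lt HYj) as (lm & Hexp).
    assert (HL : (L <= lm)%nat) by (apply Hmin; now exists j).
    destruct (Nat.eq_dec lm L) as [-> | HlmL]; [contradiction |].
    destruct (expansion_leading_term eps0 eps0_range _ _ Hexp) as (c & _ & Hlead).
    apply (leading_term_ext eps0 _ _ L 0 Hexit).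
    apply (leading_term_lower_order eps0 eps0_range _ L lm c); [lia | exact Hlead].
  - apply leading_term_ext with (fun _ => 0); [| exact (leading_term_0 eps0 eps0_range L)].
    intros eps Heps. rewrite <- Hexit by exact Heps. symmetry. now apply Hzero.
Qed.

Lemma non_absorption_exit_sum (eps : R) :
  stochastic_family N eps0 p -> 0 < eps <= eps0 ->
  1 - p eps r r = fsum N (fun j => exit_prob j eps).
Proof.
  intros Hst Heps. destruct (Hst eps Heps) as [_ Hrow].
  specialize (Hrow r r_lt).
  rewrite (fsum_remove N r) in Hrow.
  destruct (Nat.ltb_spec r N); [| lia].
  unfold exit_prob. lra.
Qed.

End NonAbsorption.

Theorem lemma5 (N : nat) (eps0 : R) (p : R -> nat -> nat -> R) (Y : nat -> nat -> Prop) :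
  (2 <= N)%nat ->
  0 < eps0 <= 1 ->
  stochastic_family N eps0 p ->
  condition_A N eps0 p Y ->
  condition_D' N eps0 p Y ->
  forall r, (r < N)%nat ->
    exists (lm lp : nat) (abar : nat -> R) (delta G e : R),
      (lm <= lp)%nat /\ abar lm <> 0 /\
      0 < delta <= 1 /\ 0 < G /\ 0 < e <= eps0 /\
      forall eps, 0 < eps <= e ->
        Rabs ((1 - p eps r r) - psum abar lm lp eps) <= G * Rpower eps (INR lp + delta).
Proof.
  intros HN Heps0 Hst HA HD r Hr.
  destruct (dec_inh_nat_subset_has_unique_least_element _ (fun L => classic _)
              (exit_order_exists N eps0 p Y r Heps0 HA HD Hr HN)) as (L & (HL & Hmin) & _).
  destruct (choice _ (exit_prob_leading_term N eps0 p Y r Heps0 HA HD Hr L Hmin))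
    as (c & Hc).
  assert (Hpos : 0 < fsum N c).
  { destruct HL as (j0 & Hj0r & HYj0 & Hexp).
    assert (Hj0 : (j0 < N)%nat) by (apply (proj1 HA r); assumption).
    apply Rlt_le_trans with (c j0); [now apply (Hc j0) |].
    apply fsum_le_term; [intros j Hj; apply (Hc j Hj) | exact Hj0]. }
  destruct (leading_term_fsum eps0 N L _ c Heps0 (fun j Hj => proj2 (proj2 (Hc j Hj))))
    as (delta & G & e & Hd & HG & He & Hbound).
  exists L, L, (fun _ => fsum N c), delta, G, e.
  repeat split; try lra; try lia.
  intros eps Heps.
  replace (psum (fun _ => fsum N c) L L eps) with (fsum N c * eps ^ L)
    by (unfold psum; rewrite Nat.sub_diag; simpl; ring).
  rewrite (non_absorption_exit_sum N eps0 p r Hr eps Hst) by lra.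
  now apply Hbound.
Qed.
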